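(* Let $(M,g)$ be a four-dimensional spacetime with signature $(+,-,-,-)$ and let $X_{abcd}$ be an irreducible $(2,2)$ double form at a point, i.e. $X$ lies in one of the six invariant subspaces listed in the context. Let $I=\tfrac14X_{abcd}X^{abcd}$. Then $$X^{a k_1k_2k_3}X_{b k_1k_2k_3}=I\,\delta^a_b.$$
   Context: A $(2,2)$ double form is a covariant 4-tensor with $X_{abcd}=-X_{bacd}=-X_{abdc}$. Call it symmetric if $X_{abcd}=X_{cdab}$ and antisymmetric if $X_{abcd}=-X_{cdab}$. With $X_{ac}=g^{bd}X_{abcd}$ (first trace), $X=g^{ac}X_{ac}$ and $\hat X_{ab}=X_{ab}-\tfrac14Xg_{ab}$, the six invariant subspaces (in dimension 4) are: (1) symmetric double forms with $X_{abcd}+X_{acdb}+X_{adbc}=0$ and all traces zero; (2) forms $\tfrac12(g_{ac}h_{bd}-g_{ad}h_{bc}+g_{bd}h_{ac}-g_{bc}h_{ad})$ with $h$ symmetric and traceless; (3) multiples of $g_{ac}g_{bd}-g_{ad}g_{bc}$; (4) totally antisymmetric 4-tensors; (5) antisymmetric double forms with vanishing first trace; (6) forms $\tfrac12(g_{ac}h_{bd}-g_{ad}h_{bc}+g_{bd}h_{ac}-g_{bc}h_{ad})$ with $h$ antisymmetric. Every double form is uniquely the sum of one element from each. *)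

From HB Require Import structures.
From mathcomp Require Import all_boot all_order all_algebra.
Set Implicit Arguments. Unset Strict Implicit. Unset Printing Implicit Defensive.
Import Order.TTheory GRing.Theory Num.Theory.
Local Open Scope ring_scope.

Notation idx := 'I_4.

(* A covariant 4-tensor at a point (components in a fixed basis). *)
Definition tensor4 (R : Type) := idx -> idx -> idx -> idx -> R.

Section DoubleForms.
Variable R : realFieldType.
Variable g : 'M[R]_4.

Definition ginv : 'M[R]_4 := invmx g.

Definition minkowski : 'M[R]_4 :=
  \matrix_(i, j) (if i == j then (if i == ord0 then 1 else -1) else 0).

Definition lorentzian_metric : Prop :=
  g^T = g /\ exists P : 'M[R]_4, P \in unitmx /\ P^T *m g *m P = minkowski.

Definition double_form (X : tensor4 R) : Prop :=
  (forall a b c d, X a b c d = - X b a c d) /\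
  (forall a b c d, X a b c d = - X a b d c).

Definition symmetric_df (X : tensor4 R) : Prop :=
  forall a b c d, X a b c d = X c d a b.

Definition antisymmetric_df (X : tensor4 R) : Prop :=
  forall a b c d, X a b c d = - X c d a b.

Definition first_trace (X : tensor4 R) (a c : idx) : R :=
  \sum_(b < 4) \sum_(d < 4) ginv b d * X a b c d.

Definition full_trace (X : tensor4 R) : R :=
  \sum_(a < 4) \sum_(c < 4) ginv a c * first_trace X a c.

Definition all_traces_zero (X : tensor4 R) : Prop :=
  (forall c d, \sum_(a < 4) \sum_(b < 4) ginv a b * X a b c d = 0) /\
  (forall b d, \sum_(a < 4) \sum_(c < 4) ginv a c * X a b c d = 0) /\
  (forall b c, \sum_(a < 4) \sum_(d < 4) ginv a d * X a b c d = 0) /\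
  (forall a d, \sum_(b < 4) \sum_(c < 4) ginv b c * X a b c d = 0) /\
  (forall a c, \sum_(b < 4) \sum_(d < 4) ginv b d * X a b c d = 0) /\
  (forall a b, \sum_(c < 4) \sum_(d < 4) ginv c d * X a b c d = 0).

Definition gh_form (h : 'M[R]_4) : tensor4 R :=
  fun a b c d => 2^-1 * (g a c * h b d - g a d * h b c + g b d * h a c - g b c * h a d).

Definition gg_form : tensor4 R :=
  fun a b c d => g a c * g b d - g a d * g b c.

Definition subspace1 (X : tensor4 R) : Prop :=
  symmetric_df X /\
  (forall a b c d, X a b c d + X a c d b + X a d b c = 0) /\
  all_traces_zero X.
Definition subspace2 (X : tensor4 R) : Prop :=
  exists h : 'M[R]_4, h^T = h /\
    \sum_(a < 4) \sum_(b < 4) ginv a b * h a b = 0 /\ X = gh_form h.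
Definition subspace3 (X : tensor4 R) : Prop :=
  exists lam : R, X = (fun a b c d => lam * gg_form a b c d).
Definition subspace4 (X : tensor4 R) : Prop :=
  (forall a b c d, X a b c d = - X b a c d) /\
  (forall a b c d, X a b c d = - X c b a d) /\
  (forall a b c d, X a b c d = - X d b c a) /\
  (forall a b c d, X a b c d = - X a c b d) /\
  (forall a b c d, X a b c d = - X a d c b) /\
  (forall a b c d, X a b c d = - X a b d c).
Definition subspace5 (X : tensor4 R) : Prop :=
  antisymmetric_df X /\ (forall a c, first_trace X a c = 0).
Definition subspace6 (X : tensor4 R) : Prop :=
  exists h : 'M[R]_4, h^T = - h /\ X = gh_form h.

Definition irreducible_df (X : tensor4 R) : Prop :=
  double_form X /\
  (subspace1 X \/ subspace2 X \/ subspace3 X \/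
   subspace4 X \/ subspace5 X \/ subspace6 X).

Definition raise_all (X : tensor4 R) : tensor4 R :=
  fun a b c d => \sum_(p < 4) \sum_(q < 4) \sum_(r < 4) \sum_(s < 4)
    ginv a p * ginv b q * ginv c r * ginv d s * X p q r s.

Definition invI (X : tensor4 R) : R :=
  4^-1 * \sum_(a < 4) \sum_(b < 4) \sum_(c < 4) \sum_(d < 4)
    X a b c d * raise_all X a b c d.

Definition XX (X : tensor4 R) (a b : idx) : R :=
  \sum_(k1 < 4) \sum_(k2 < 4) \sum_(k3 < 4) raise_all X a k1 k2 k3 * X b k1 k2 k3.

End DoubleForms.

(* Choose a frame P with P^T g P = diag(1,-1,-1,-1).  The components of X in
   that frame form a double form Y of the same irreducible type, and the matrix
   X^a_{klm} X_b^{klm} is conjugate by P to the corresponding matrix of Y.  Since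
   I is a quarter of its trace, it suffices to show that this matrix is scalar
   for Y.  In an orthonormal frame every class is parametrised by its independent
   components: the slot symmetries normalise indices, and the trace conditions
   and the cyclic identity solve for the remaining ones.  Each of the sixteen
   entries is then a polynomial identity. *)

From mathcomp Require Import all_boot all_order all_algebra ring lra zify.
From Stdlib Require Import FunctionalExtensionality Lia.
Set Implicit Arguments. Unset Strict Implicit. Unset Printing Implicit Defensive.
Import GRing.Theory Num.Theory.
Local Open Scope ring_scope.

Notation o0 := (@Ordinal 4 0 isT).
Notation o1 := (@Ordinal 4 1 isT).
Notation o2 := (@Ordinal 4 2 isT).
Notation o3 := (@Ordinal 4 3 isT).

Lemma ord4_cases (a : idx) : [\/ a = o0, a = o1, a = o2 | a = o3].
Proof.
case: a => [[|[|[|[|//]]]] ?]; [apply: Or41 | apply: Or42 | apply: Or43 | apply: Or44];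
  exact: val_inj.
Qed.

Lemma tensor_eq (T : Type) (X Y : tensor4 T) :
  (forall a b c d, X a b c d = Y a b c d) -> X = Y.
Proof. by move=> XY; do 4 (apply: functional_extensionality => ?); exact: XY. Qed.

Section FrameChange.
Variable R : realFieldType.
Implicit Types (k : R) (g h M N A B P : 'M[R]_4) (X Y U V W : tensor4 R).

Definition slot1 M X : tensor4 R := fun a b c d => \sum_(p < 4) M p a * X p b c d.
Definition slot2 M X : tensor4 R := fun a b c d => \sum_(p < 4) M p b * X a p c d.
Definition slot3 M X : tensor4 R := fun a b c d => \sum_(p < 4) M p c * X a b p d.
Definition slot4 M X : tensor4 R := fun a b c d => \sum_(p < 4) M p d * X a b c p.

(* The components of [X] in the frame formed by the columns of [M]. *)
Definition pullback M X : tensor4 R := slot1 M (slot2 M (slot3 M (slot4 M X))).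

Lemma pullbackE M X a b c d : pullback M X a b c d =
  \sum_(p < 4) \sum_(q < 4) \sum_(r < 4) \sum_(s < 4)
    M p a * M q b * M r c * M s d * X p q r s.
Proof.
apply: eq_bigr => p _; rewrite mulr_sumr; apply: eq_bigr => q _.
rewrite !mulr_sumr; apply: eq_bigr => r _; rewrite !mulr_sumr; apply: eq_bigr => s _.
by rewrite !mulrA.
Qed.

Lemma exchange_weighted_sums (u v : idx -> R) (F : idx -> idx -> R) :
  \sum_(p < 4) u p * \sum_(q < 4) v q * F p q =
  \sum_(q < 4) v q * \sum_(p < 4) u p * F p q.
Proof.
under eq_bigr do rewrite mulr_sumr; under [RHS]eq_bigr do rewrite mulr_sumr.
by rewrite exchange_big; apply: eq_bigr => q _; apply: eq_bigr => p _; rewrite mulrCA.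
Qed.

Lemma slot21C M N X : slot2 N (slot1 M X) = slot1 M (slot2 N X).
Proof. by apply: tensor_eq => *; exact: (exchange_weighted_sums _ _ (fun q p => X p q _ _)). Qed.
Lemma slot31C M N X : slot3 N (slot1 M X) = slot1 M (slot3 N X).
Proof. by apply: tensor_eq => *; exact: (exchange_weighted_sums _ _ (fun q p => X p _ q _)). Qed.
Lemma slot41C M N X : slot4 N (slot1 M X) = slot1 M (slot4 N X).
Proof. by apply: tensor_eq => *; exact: (exchange_weighted_sums _ _ (fun q p => X p _ _ q)). Qed.
Lemma slot32C M N X : slot3 N (slot2 M X) = slot2 M (slot3 N X).
Proof. by apply: tensor_eq => *; exact: (exchange_weighted_sums _ _ (fun q p => X _ p q _)). Qed.
Lemma slot42C M N X : slot4 N (slot2 M X) = slot2 M (slot4 N X).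
Proof. by apply: tensor_eq => *; exact: (exchange_weighted_sums _ _ (fun q p => X _ p _ q)). Qed.
Lemma slot43C M N X : slot4 N (slot3 M X) = slot3 M (slot4 N X).
Proof. by apply: tensor_eq => *; exact: (exchange_weighted_sums _ _ (fun q p => X _ _ p q)). Qed.

Ltac slot_sort := repeat first
  [rewrite slot21C | rewrite slot31C | rewrite slot41C
  | rewrite slot32C | rewrite slot42C | rewrite slot43C].

Lemma sum_weighted_compose (m : idx -> R) (n : idx -> idx -> R) (f : idx -> R) :
  \sum_(p < 4) m p * \sum_(q < 4) n q p * f q =
  \sum_(q < 4) (\sum_(p < 4) n q p * m p) * f q.
Proof.
under eq_bigr do rewrite mulr_sumr; under [RHS]eq_bigr do rewrite mulr_suml.
by rewrite exchange_big; apply: eq_bigr => q _; apply: eq_bigr => p _; rewrite mulrCA mulrA.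
Qed.

Lemma slot1M M N X : slot1 M (slot1 N X) = slot1 (N *m M) X.
Proof.
apply: tensor_eq => *; rewrite /slot1 sum_weighted_compose.
by under [RHS]eq_bigr do rewrite mxE.
Qed.
Lemma slot2M M N X : slot2 M (slot2 N X) = slot2 (N *m M) X.
Proof.
apply: tensor_eq => *; rewrite /slot2 sum_weighted_compose.
by under [RHS]eq_bigr do rewrite mxE.
Qed.
Lemma slot3M M N X : slot3 M (slot3 N X) = slot3 (N *m M) X.
Proof.
apply: tensor_eq => *; rewrite /slot3 sum_weighted_compose.
by under [RHS]eq_bigr do rewrite mxE.
Qed.
Lemma slot4M M N X : slot4 M (slot4 N X) = slot4 (N *m M) X.
Proof.
apply: tensor_eq => *; rewrite /slot4 sum_weighted_compose.
by under [RHS]eq_bigr do rewrite mxE.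
Qed.

Lemma pullbackM M N X : pullback M (pullback N X) = pullback (N *m M) X.
Proof. by rewrite /pullback; slot_sort; rewrite slot1M slot2M slot3M slot4M. Qed.

Lemma sum_mx1 (f : idx -> R) a : \sum_(p < 4) (1%:M : 'M[R]_4) p a * f p = f a.
Proof.
rewrite (bigD1 a) //= big1 => [|p /negbTE pa]; last by rewrite mxE pa mul0r.
by rewrite mxE eqxx mul1r addr0.
Qed.

Lemma pullback1 X : pullback 1%:M X = X.
Proof.
by apply: tensor_eq => *; rewrite /pullback /slot1 /slot2 /slot3 /slot4 !sum_mx1.
Qed.

Definition tscale k X : tensor4 R := fun a b c d => k * X a b c d.
Definition tadd U V : tensor4 R := fun a b c d => U a b c d + V a b c d.

Lemma pullbackZ M k X : pullback M (tscale k X) = tscale k (pullback M X).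
Proof.
apply: tensor_eq => *; rewrite /tscale !pullbackE.
by do 4 (rewrite mulr_sumr; apply: eq_bigr => ? _); rewrite mulrCA.
Qed.

Lemma pullbackD M U V : pullback M (tadd U V) = tadd (pullback M U) (pullback M V).
Proof.
apply: tensor_eq => *; rewrite /tadd !pullbackE.
by do 4 (rewrite -big_split; apply: eq_bigr => ? _); rewrite mulrDr.
Qed.

Definition swap12 X : tensor4 R := fun a b c d => X b a c d.
Definition swap34 X : tensor4 R := fun a b c d => X a b d c.
Definition swap23 X : tensor4 R := fun a b c d => X a c b d.
Definition swap_pairs X : tensor4 R := fun a b c d => X c d a b.
Definition cycle234 X : tensor4 R := fun a b c d => X a c d b.
Definition cycle243 X : tensor4 R := fun a b c d => X a d b c.

Definition bianchi X := forall a b c d, X a b c d + X a c d b + X a d b c = 0.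

Lemma pullback_swap12 M X : pullback M (swap12 X) = swap12 (pullback M X).
Proof.
by rewrite /pullback; transitivity (slot2 M (slot1 M (slot3 M (slot4 M (swap12 X)))));
  [slot_sort | ].
Qed.
Lemma pullback_swap34 M X : pullback M (swap34 X) = swap34 (pullback M X).
Proof.
by rewrite /pullback; transitivity (slot1 M (slot2 M (slot4 M (slot3 M (swap34 X)))));
  [slot_sort | ].
Qed.
Lemma pullback_swap23 M X : pullback M (swap23 X) = swap23 (pullback M X).
Proof.
by rewrite /pullback; transitivity (slot1 M (slot3 M (slot2 M (slot4 M (swap23 X)))));
  [slot_sort | ].
Qed.
Lemma pullback_swap_pairs M X : pullback M (swap_pairs X) = swap_pairs (pullback M X).
Proof.
by rewrite /pullback; transitivity (slot3 M (slot4 M (slot1 M (slot2 M (swap_pairs X)))));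
  [slot_sort | ].
Qed.
Lemma pullback_cycle234 M X : pullback M (cycle234 X) = cycle234 (pullback M X).
Proof.
by rewrite /pullback; transitivity (slot1 M (slot3 M (slot4 M (slot2 M (cycle234 X)))));
  [slot_sort | ].
Qed.
Lemma pullback_cycle243 M X : pullback M (cycle243 X) = cycle243 (pullback M X).
Proof.
by rewrite /pullback; transitivity (slot1 M (slot4 M (slot2 M (slot3 M (cycle243 X)))));
  [slot_sort | ].
Qed.

Lemma exchange_big3 (H : idx -> idx -> idx -> R) :
  \sum_(m < 4) \sum_(p < 4) \sum_(q < 4) H m p q =
  \sum_(p < 4) \sum_(q < 4) \sum_(m < 4) H m p q.
Proof. by rewrite exchange_big; apply: eq_bigr => p _; rewrite exchange_big. Qed.

Lemma sum_dual_pair A B (u v : idx -> R) : A *m B^T = 1%:M ->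
  \sum_(k < 4) (\sum_(p < 4) A p k * u p) * (\sum_(q < 4) B q k * v q) =
  \sum_(p < 4) u p * v p.
Proof.
move=> AB; under eq_bigr do rewrite big_distrlr.
rewrite exchange_big3.
transitivity (\sum_(p < 4) \sum_(q < 4) (A *m B^T) p q * (u p * v q)).
  apply: eq_bigr => p _; apply: eq_bigr => q _; rewrite mxE mulr_suml.
  by apply: eq_bigr => k _; rewrite mxE mulrACA.
by rewrite AB exchange_big; apply: eq_bigr => q _; exact: sum_mx1.
Qed.

Lemma sum3_mul_weighted (x y : idx -> R) (F G : idx -> idx -> idx -> idx -> R) :
  \sum_(k < 4) \sum_(l < 4) \sum_(m < 4)
    (\sum_(p < 4) x p * F p k l m) * (\sum_(q < 4) y q * G q k l m) =
  \sum_(p < 4) \sum_(q < 4)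
    x p * y q * \sum_(k < 4) \sum_(l < 4) \sum_(m < 4) F p k l m * G q k l m.
Proof.
under eq_bigr do under eq_bigr do under eq_bigr do rewrite big_distrlr.
under eq_bigr do under eq_bigr do rewrite exchange_big3.
under eq_bigr do rewrite exchange_big3.
rewrite exchange_big3; apply: eq_bigr => p _; apply: eq_bigr => q _.
rewrite mulr_sumr; apply: eq_bigr => k _; rewrite mulr_sumr; apply: eq_bigr => l _.
by rewrite mulr_sumr; apply: eq_bigr => m _; rewrite mulrACA.
Qed.

Definition contract3 U V : 'M[R]_4 :=
  \matrix_(a, b) \sum_(k < 4) \sum_(l < 4) \sum_(m < 4) U a k l m * V b k l m.

Lemma contract3_slot1 A B U V :
  contract3 (slot1 A U) (slot1 B V) = A^T *m contract3 U V *m B.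
Proof.
apply/matrixP => a b; rewrite !mxE sum3_mul_weighted.
under [RHS]eq_bigr do rewrite mxE mulr_suml.
rewrite exchange_big; apply: eq_bigr => p _; apply: eq_bigr => q _.
by rewrite !mxE mulrAC.
Qed.

Lemma contract3_slot2 A B U V : A *m B^T = 1%:M ->
  contract3 (slot2 A U) (slot2 B V) = contract3 U V.
Proof.
move=> AB; apply/matrixP => a b; rewrite !mxE exchange_big3 [RHS]exchange_big3.
by apply: eq_bigr => l _; apply: eq_bigr => m _; exact: sum_dual_pair.
Qed.

Lemma contract3_slot3 A B U V : A *m B^T = 1%:M ->
  contract3 (slot3 A U) (slot3 B V) = contract3 U V.
Proof.
move=> AB; apply/matrixP => a b; rewrite !mxE; apply: eq_bigr => k _.
by rewrite exchange_big [RHS]exchange_big; apply: eq_bigr => m _; exact: sum_dual_pair.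
Qed.

Lemma contract3_slot4 A B U V : A *m B^T = 1%:M ->
  contract3 (slot4 A U) (slot4 B V) = contract3 U V.
Proof.
move=> AB; apply/matrixP => a b; rewrite !mxE; apply: eq_bigr => k _.
by apply: eq_bigr => l _; exact: sum_dual_pair.
Qed.

Lemma contract3_pullback A B U V : A *m B^T = 1%:M ->
  contract3 (pullback A U) (pullback B V) = A^T *m contract3 U V *m B.
Proof.
by move=> AB; rewrite contract3_slot1 contract3_slot2 // contract3_slot3 // contract3_slot4.
Qed.

Lemma raise_allE g X : raise_all g X = pullback (ginv g)^T X.
Proof.
apply: tensor_eq => *; rewrite pullbackE.
by do 4 (apply: eq_bigr => ? _); rewrite !mxE.
Qed.

Definition trace24 B X a c : R := \sum_(b < 4) \sum_(d < 4) B b d * X a b c d.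

Lemma sum2_weighted_pull (B : idx -> idx -> R) (m : idx -> R) (w : idx -> idx -> idx -> R) :
  \sum_(b < 4) \sum_(d < 4) B b d * \sum_(p < 4) m p * w p b d =
  \sum_(p < 4) m p * \sum_(b < 4) \sum_(d < 4) B b d * w p b d.
Proof.
under eq_bigr do under eq_bigr do rewrite mulr_sumr.
rewrite -exchange_big3; apply: eq_bigr => p _; rewrite mulr_sumr.
by apply: eq_bigr => b _; rewrite mulr_sumr; apply: eq_bigr => d _; rewrite mulrCA.
Qed.

Lemma sum2_congruence M B (w : idx -> idx -> R) :
  \sum_(b < 4) \sum_(d < 4) B b d * (\sum_(q < 4) M q b * \sum_(s < 4) M s d * w q s) =
  \sum_(q < 4) \sum_(s < 4) (M *m B *m M^T) q s * w q s.
Proof.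
transitivity (\sum_(b < 4) \sum_(d < 4) \sum_(q < 4) \sum_(s < 4)
                M q b * B b d * M s d * w q s).
  apply: eq_bigr => b _; apply: eq_bigr => d _; rewrite mulr_sumr.
  by apply: eq_bigr => q _; rewrite mulrCA !mulr_sumr; apply: eq_bigr => s _; ring.
under eq_bigr do rewrite exchange_big3.
rewrite exchange_big3; apply: eq_bigr => q _; apply: eq_bigr => s _.
rewrite mxE mulr_suml exchange_big; apply: eq_bigr => b _.
by rewrite mxE !mulr_suml; apply: eq_bigr => d _; rewrite !mxE.
Qed.

Lemma trace24_pullback_eq0 B P X :
  (forall p r, trace24 (P *m B *m P^T) X p r = 0) ->
  forall a c, trace24 B (pullback P X) a c = 0.
Proof.
move=> X0 a c.
have -> : pullback P X = slot1 P (slot3 P (slot2 P (slot4 P X))) by rewrite /pullback; slot_sort.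
rewrite {1}/trace24 /slot1 sum2_weighted_pull big1 // => p _.
rewrite /slot3 sum2_weighted_pull big1 ?mulr0 // => r _.
by have := X0 p r; rewrite /trace24 /slot2 /slot4 sum2_congruence => ->; rewrite mulr0.
Qed.

Definition tprod A B : tensor4 R := fun a b c d => A a c * B b d.

Lemma slot1_tprod M A B : slot1 M (tprod A B) = tprod (M^T *m A) B.
Proof.
apply: tensor_eq => *; rewrite /slot1 /tprod mxE mulr_suml.
by apply: eq_bigr => p _; rewrite mxE; ring.
Qed.
Lemma slot2_tprod M A B : slot2 M (tprod A B) = tprod A (M^T *m B).
Proof.
apply: tensor_eq => *; rewrite /slot2 /tprod mxE mulr_sumr.
by apply: eq_bigr => p _; rewrite mxE; ring.
Qed.
Lemma slot3_tprod M A B : slot3 M (tprod A B) = tprod (A *m M) B.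
Proof.
by apply: tensor_eq => *; rewrite /slot3 /tprod mxE mulr_suml; apply: eq_bigr => p _; ring.
Qed.
Lemma slot4_tprod M A B : slot4 M (tprod A B) = tprod A (B *m M).
Proof.
by apply: tensor_eq => *; rewrite /slot4 /tprod mxE mulr_sumr; apply: eq_bigr => p _; ring.
Qed.

Lemma pullback_tprod M A B : pullback M (tprod A B) = tprod (M^T *m A *m M) (M^T *m B *m M).
Proof. by rewrite /pullback slot4_tprod slot3_tprod slot2_tprod slot1_tprod !mulmxA. Qed.

Lemma gh_form_tprod g h : gh_form g h =
  tscale 2^-1 (tadd (tadd (tprod g h) (tscale (-1) (swap34 (tprod g h))))
                    (tadd (tprod h g) (tscale (-1) (swap34 (tprod h g))))).
Proof. by apply: tensor_eq => *; rewrite /gh_form /tscale /tadd /swap34 /tprod; ring. Qed.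

Lemma pullback_gh_form M g h :
  pullback M (gh_form g h) = gh_form (M^T *m g *m M) (M^T *m h *m M).
Proof.
(* No [rewrite !pullback_swap34]: [swap34 ?X] matches every tensor by
   higher-order unification, so the rewrites are applied one at a time. *)
rewrite !gh_form_tprod pullbackZ pullbackD; congr (tscale _ (tadd _ _));
  by rewrite pullbackD pullback_tprod pullbackZ pullback_swap34 pullback_tprod.
Qed.

Lemma gg_form_gh g : gg_form g = gh_form g g.
Proof. by apply: tensor_eq => *; rewrite /gg_form /gh_form; field. Qed.

End FrameChange.

Section MinkowskiFrame.
Variable R : realFieldType.
Implicit Types (g P : 'M[R]_4) (X Y : tensor4 R).
Local Notation eta := (minkowski R).

Lemma minkowski_tr : eta^T = eta.
Proof. by apply/matrixP => i j; rewrite !mxE eq_sym; case: eqP => // ->. Qed.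

Lemma sum_minkowski (f : idx -> R) a : \sum_(p < 4) eta p a * f p = eta a a * f a.
Proof.
rewrite (bigD1 a) //= big1 ?addr0 // => p /negbTE pa.
by rewrite mxE pa mul0r.
Qed.

Lemma minkowski_sqr : eta *m eta = 1%:M.
Proof.
apply/matrixP => i j; rewrite mxE; under eq_bigr do rewrite mulrC.
rewrite sum_minkowski !mxE; case: (i =P j) => [->|_]; last by rewrite mulr0.
by rewrite eqxx mulr1n; case: ifP => _; rewrite ?mulrNN mulr1.
Qed.

Lemma ginv_minkowski : ginv eta = eta.
Proof.
have [_ eta_unit] := mulmx1_unit minkowski_sqr.
by rewrite /ginv -[invmx eta]mulmx1 -minkowski_sqr mulmxA mulVmx // mul1mx.
Qed.

Lemma ginv_frame g P : P \in unitmx -> P^T *m g *m P = eta ->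
  ginv g = P *m eta *m P^T.
Proof.
move=> Pu gP; set K := P *m eta *m P^T.
have Kg : K *m g = 1%:M.
  have KgP : K *m g *m P = P by rewrite /K -!mulmxA [P^T *m _]mulmxA gP minkowski_sqr mulmx1.
  by rewrite -[K *m g]mulmx1 -(mulmxV Pu) mulmxA KgP.
have [_ gu] := mulmx1_unit Kg.
by rewrite /ginv -[invmx g]mul1mx -Kg -mulmxA mulmxV // mulmx1.
Qed.

Definition XXmx g X : 'M[R]_4 := \matrix_(a, b) XX g X a b.

Lemma XXmxE g X : XXmx g X = contract3 (raise_all g X) X.
Proof. by apply/matrixP => a b; rewrite !mxE. Qed.

Lemma invI_trace g X : invI g X = 4^-1 * \tr (XXmx g X).
Proof.
rewrite /invI /mxtrace; congr (_ * _); apply: eq_bigr => a _; rewrite mxE.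
by do 3 (apply: eq_bigr => ? _); rewrite mulrC.
Qed.

Lemma XXmx_pullback g P X : P \in unitmx -> P^T *m g *m P = eta ->
  XXmx g X = P *m XXmx eta (pullback P X) *m invmx P.
Proof.
move=> Pu gP; set Y := pullback P X.
have PiP : invmx P *m P = 1%:M := mulVmx Pu.
have XY : X = pullback (invmx P) Y by rewrite /Y pullbackM mulmxV // pullback1.
clearbody Y.
have raiseX : raise_all g X = pullback P^T (raise_all eta Y).
  rewrite !raise_allE (ginv_frame Pu gP) ginv_minkowski minkowski_tr {1}XY !pullbackM.
  by rewrite !trmx_mul trmxK minkowski_tr !mulmxA PiP mul1mx.
rewrite !XXmxE raiseX [X in contract3 _ X]XY contract3_pullback ?trmxK //.
by rewrite -trmx_mul PiP trmx1.
Qed.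

Definition sgn (a : idx) : R := if a == ord0 then 1 else -1.

Lemma minkowski_fun : fun_of_matrix eta = fun a b => if a == b then sgn a else 0.
Proof. by do 2 apply: functional_extensionality => ?; rewrite mxE. Qed.

Lemma raise_all_minkowski Y a b c d :
  raise_all eta Y a b c d = sgn a * sgn b * sgn c * sgn d * Y a b c d.
Proof.
rewrite raise_allE ginv_minkowski minkowski_tr /pullback /slot1 /slot2 /slot3 /slot4.
by rewrite !sum_minkowski minkowski_fun !eqxx !mulrA.
Qed.

Definition sum4 (f : idx -> R) : R := f o0 + f o1 + f o2 + f o3.

Lemma big_ord4 (f : idx -> R) : \sum_(i < 4) f i = sum4 f.
Proof.
rewrite /sum4 !big_ord_recl big_ord0 addr0 !addrA.
by congr (_ + _ + _ + _); congr f; apply: val_inj.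
Qed.

Lemma XX_minkowski Y p q : XX eta Y p q =
  sum4 (fun k => sum4 (fun l => sum4 (fun m =>
    sgn p * sgn k * sgn l * sgn m * Y p k l m * Y q k l m))).
Proof.
rewrite /XX big_ord4; congr sum4; apply: functional_extensionality => k.
rewrite big_ord4; congr sum4; apply: functional_extensionality => l.
rewrite big_ord4; congr sum4; apply: functional_extensionality => m.
by rewrite raise_all_minkowski.
Qed.

End MinkowskiFrame.

Arguments sgn R a /.
Arguments sum4 R f /.

Section Sorting.
Variable R : realFieldType.
Implicit Types Y : tensor4 R.

Definition alt (x y : nat) (u v : R) : R :=
  if (x < y)%N then u else if (y < x)%N then - v else 0.

Lemma alt_keep (x y : nat) (u v : R) : u = - v -> (x = y -> u = v) -> alt x y u v = u.
Proof.
move=> uNv xy_uv; rewrite /alt; case: ltngtP => // /xy_uv uv.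
by move: uNv; rewrite {1}uv; lra.
Qed.

Definition alt12 Y : tensor4 R := fun a b c d => alt a b (Y a b c d) (Y b a c d).
Definition alt34 Y : tensor4 R := fun a b c d => alt c d (Y a b c d) (Y a b d c).
Definition alt13 Y : tensor4 R := fun a b c d => alt a c (Y a b c d) (Y c b a d).
Definition alt24 Y : tensor4 R := fun a b c d => alt b d (Y a b c d) (Y a d c b).
Definition alt23 Y : tensor4 R := fun a b c d => alt b c (Y a b c d) (Y a c b d).

Definition pair_key (a b : idx) : nat := 4 * a + b.

Definition alt_pairs Y : tensor4 R :=
  fun a b c d => alt (pair_key a b) (pair_key c d) (Y a b c d) (Y c d a b).
Definition sym_pairs Y : tensor4 R :=
  fun a b c d => if (pair_key a b <= pair_key c d)%N then Y a b c d else Y c d a b.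

Lemma alt12_id Y : (forall a b c d, Y a b c d = - Y b a c d) -> alt12 Y = Y.
Proof. by move=> YA; apply: tensor_eq => *; apply: alt_keep => // /val_inj ->. Qed.
Lemma alt34_id Y : (forall a b c d, Y a b c d = - Y a b d c) -> alt34 Y = Y.
Proof. by move=> YA; apply: tensor_eq => *; apply: alt_keep => // /val_inj ->. Qed.
Lemma alt13_id Y : (forall a b c d, Y a b c d = - Y c b a d) -> alt13 Y = Y.
Proof. by move=> YA; apply: tensor_eq => *; apply: alt_keep => // /val_inj ->. Qed.
Lemma alt24_id Y : (forall a b c d, Y a b c d = - Y a d c b) -> alt24 Y = Y.
Proof. by move=> YA; apply: tensor_eq => *; apply: alt_keep => // /val_inj ->. Qed.
Lemma alt23_id Y : (forall a b c d, Y a b c d = - Y a c b d) -> alt23 Y = Y.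
Proof. by move=> YA; apply: tensor_eq => *; apply: alt_keep => // /val_inj ->. Qed.

Lemma pair_key_inj a b c d : pair_key a b = pair_key c d -> a = c /\ b = d.
Proof.
rewrite /pair_key => key; have := ltn_ord b; have := ltn_ord d.
by split; apply: val_inj => /=; lia.
Qed.

Lemma alt_pairs_id Y : (forall a b c d, Y a b c d = - Y c d a b) -> alt_pairs Y = Y.
Proof. by move=> YA; apply: tensor_eq => *; apply: alt_keep => // /pair_key_inj [-> ->]. Qed.
Lemma sym_pairs_id Y : (forall a b c d, Y a b c d = Y c d a b) -> sym_pairs Y = Y.
Proof. by move=> YS; apply: tensor_eq => *; rewrite /sym_pairs; case: leqP. Qed.

End Sorting.

Arguments alt R x y u v /.
Arguments alt12 R Y a b c d /.
Arguments alt34 R Y a b c d /.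
Arguments alt13 R Y a b c d /.
Arguments alt24 R Y a b c d /.
Arguments alt23 R Y a b c d /.
Arguments alt_pairs R Y a b c d /.
Arguments sym_pairs R Y a b c d /.

Section MinkowskiCases.
Variable R : realFieldType.
Implicit Types (h : 'M[R]_4) (Y : tensor4 R).
Local Notation eta := (minkowski R).

Lemma is_scalar_XXmx Y :
  (forall p q, p != q -> XX eta Y p q = 0) -> (forall p, XX eta Y p p = XX eta Y o0 o0) ->
  is_scalar_mx (XXmx eta Y).
Proof.
move=> offdiag diag; apply/is_scalar_mxP; exists (XX eta Y o0 o0).
apply/matrixP => p q; rewrite !mxE; case: eqVneq => [<-|/offdiag ->]; first by rewrite diag.
by rewrite mulr0n.
Qed.

Ltac entrywise :=
  let p := fresh "p" in let q := fresh "q" in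
  apply: is_scalar_XXmx => [p q | p];
  [case: (ord4_cases p) => ->; case: (ord4_cases q) => -> // _
  | case: (ord4_cases p) => -> //];
  rewrite !XX_minkowski /=.

Lemma XX_scalar_gg (lam : R) :
  is_scalar_mx (XXmx eta (fun a b c d => lam * gg_form eta a b c d)).
Proof. by entrywise; rewrite /gg_form minkowski_fun /=; ring. Qed.

Lemma XX_scalar_alt Y : double_form Y -> (forall a b c d, Y a b c d = - Y a c b d) ->
  is_scalar_mx (XXmx eta Y).
Proof.
move=> [A12 A34] A23.
have A13 a b c d : Y a b c d = - Y c b a d by rewrite A12 A23 A12 opprK.
have A24 a b c d : Y a b c d = - Y a d c b by rewrite A34 A23 A34 opprK.
(* Comparing slots 12, 34, 13, 24 and then 23 sorts any four indices, so the
   normal form evaluates every entry to [Y o0 o1 o2 o3], its opposite or 0. *)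
have N : Y = alt12 (alt34 (alt13 (alt24 (alt23 Y)))).
  by rewrite alt23_id // alt24_id // alt13_id // alt34_id // alt12_id.
by entrywise; rewrite N /=; ring.
Qed.

Lemma XX_scalar_gh_sym h : h^T = h -> \sum_(a < 4) \sum_(b < 4) eta a b * h a b = 0 ->
  is_scalar_mx (XXmx eta (gh_form eta h)).
Proof.
move=> hS htr.
have N : fun_of_matrix h = fun i j => if (i <= j)%N then h i j else h j i.
  do 2 apply: functional_extensionality => ?; case: leqP => // _.
  by rewrite -[in LHS]hS mxE.
have h00 : h o0 o0 = h o1 o1 + h o2 o2 + h o3 o3.
  by move: htr; rewrite big_ord4 /= !big_ord4 minkowski_fun /=; lra.
by entrywise; rewrite /gh_form minkowski_fun N /= h00; ring.
Qed.

Lemma XX_scalar_gh_skew h : h^T = - h -> is_scalar_mx (XXmx eta (gh_form eta h)).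
Proof.
move=> hA.
have N : fun_of_matrix h = fun i j => alt i j (h i j) (h j i).
  apply: functional_extensionality => i; apply: functional_extensionality => j.
  rewrite alt_keep // => [|/val_inj -> //].
  by have := congr1 (fun M : 'M[R]_4 => M j i) hA; rewrite !mxE.
by entrywise; rewrite /gh_form minkowski_fun N /=; ring.
Qed.

Lemma first_trace_minkowski Y a c :
  first_trace eta Y a c = Y a o0 c o0 - Y a o1 c o1 - Y a o2 c o2 - Y a o3 c o3.
Proof. rewrite /first_trace ginv_minkowski big_ord4 /= !big_ord4 minkowski_fun /=; ring. Qed.

Lemma XX_scalar_weyl Y : double_form Y -> symmetric_df Y -> bianchi Y ->
  (forall a c, first_trace eta Y a c = 0) -> is_scalar_mx (XXmx eta Y).
Proof.
move=> [A12 A34] S Bi Ric.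
have N : Y = alt12 (alt34 (sym_pairs Y)) by rewrite sym_pairs_id // alt34_id // alt12_id.
have ric a c : Y a o0 c o0 - Y a o1 c o1 - Y a o2 c o2 - Y a o3 c o3 = 0.
  by rewrite -first_trace_minkowski.
have R00 := ric o0 o0; have R11 := ric o1 o1; have R22 := ric o2 o2; have R33 := ric o3 o3.
have R01 := ric o0 o1; have R02 := ric o0 o2; have R03 := ric o0 o3.
have R12 := ric o1 o2; have R13 := ric o1 o3; have R23 := ric o2 o3.
have B0123 := Bi o0 o1 o2 o3.
rewrite N /= in R00 R11 R22 R33 R01 R02 R03 R12 R13 R23 B0123.
(* Ricci-flatness and the cyclic identity determine 11 of the 21 normalised
   components from the 10 components carrying the electric and magnetic parts. *)
have e1 : Y o2 o3 o2 o3 = - Y o0 o1 o0 o1 by lra.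
have e2 : Y o1 o3 o1 o3 = - Y o0 o2 o0 o2 by lra.
have e3 : Y o1 o2 o1 o2 = Y o0 o1 o0 o1 + Y o0 o2 o0 o2 by lra.
have e4 : Y o0 o3 o0 o3 = - Y o0 o1 o0 o1 - Y o0 o2 o0 o2 by lra.
have e5 : Y o1 o3 o2 o3 = Y o0 o1 o0 o2 by lra.
have e6 : Y o1 o2 o2 o3 = - Y o0 o1 o0 o3 by lra.
have e7 : Y o1 o2 o1 o3 = Y o0 o2 o0 o3 by lra.
have e8 : Y o0 o3 o1 o3 = - Y o0 o2 o1 o2 by lra.
have e9 : Y o0 o3 o2 o3 = Y o0 o1 o1 o2 by lra.
have e10 : Y o0 o2 o2 o3 = - Y o0 o1 o1 o3 by lra.
have e11 : Y o0 o3 o1 o2 = Y o0 o2 o1 o3 - Y o0 o1 o2 o3 by lra.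
by entrywise; rewrite N /= ?e1 ?e2 ?e3 ?e4 ?e5 ?e6 ?e7 ?e8 ?e9 ?e10 ?e11; ring.
Qed.

Lemma XX_scalar_antisym Y : double_form Y -> antisymmetric_df Y ->
  (forall a c, first_trace eta Y a c = 0) -> is_scalar_mx (XXmx eta Y).
Proof.
move=> [A12 A34] AS Ric.
have N : Y = alt12 (alt34 (alt_pairs Y)) by rewrite alt_pairs_id // alt34_id // alt12_id.
have ric a c : Y a o0 c o0 - Y a o1 c o1 - Y a o2 c o2 - Y a o3 c o3 = 0.
  by rewrite -first_trace_minkowski.
have R01 := ric o0 o1; have R02 := ric o0 o2; have R03 := ric o0 o3.
have R12 := ric o1 o2; have R13 := ric o1 o3; have R23 := ric o2 o3.
rewrite N /= in R01 R02 R03 R12 R13 R23.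
have e1 : Y o0 o3 o1 o3 = - Y o0 o2 o1 o2 by lra.
have e2 : Y o0 o3 o2 o3 = Y o0 o1 o1 o2 by lra.
have e3 : Y o0 o2 o2 o3 = - Y o0 o1 o1 o3 by lra.
have e4 : Y o1 o3 o2 o3 = Y o0 o1 o0 o2 by lra.
have e5 : Y o1 o2 o2 o3 = - Y o0 o1 o0 o3 by lra.
have e6 : Y o1 o2 o1 o3 = Y o0 o2 o0 o3 by lra.
by entrywise; rewrite N /= ?e1 ?e2 ?e3 ?e4 ?e5 ?e6; ring.
Qed.

End MinkowskiCases.

Section Transfer.
Variable R : realFieldType.
Implicit Types (g h M P : 'M[R]_4) (X : tensor4 R) (s : tensor4 R -> tensor4 R).
Local Notation eta := (minkowski R).

Lemma pullback_antisym M s X : (forall Z, pullback M (s Z) = s (pullback M Z)) ->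
  (forall a b c d, X a b c d = - s X a b c d) ->
  forall a b c d, pullback M X a b c d = - s (pullback M X) a b c d.
Proof.
move=> sM XA a b c d.
have XE : X = tscale (-1) (s X) by apply: tensor_eq => ????; rewrite /tscale mulN1r -XA.
by rewrite {1}XE pullbackZ sM /tscale mulN1r.
Qed.

Lemma pullback_sym M s X : (forall Z, pullback M (s Z) = s (pullback M Z)) ->
  (forall a b c d, X a b c d = s X a b c d) ->
  forall a b c d, pullback M X a b c d = s (pullback M X) a b c d.
Proof. by move=> sM /tensor_eq XE a b c d; rewrite {1}XE sM. Qed.

Lemma double_form_pullback M X : double_form X -> double_form (pullback M X).
Proof.
by case=> A12 A34; split;
  [exact: pullback_antisym (pullback_swap12 M) A12
  | exact: pullback_antisym (pullback_swap34 M) A34].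
Qed.

Lemma bianchi_pullback M X : bianchi X -> bianchi (pullback M X).
Proof.
move=> BX.
have XE : X = tscale (-1) (tadd (cycle234 X) (cycle243 X)).
  apply: tensor_eq => a b c d; move: (BX a b c d).
  by rewrite /tscale /tadd /cycle234 /cycle243; lra.
move=> a b c d; rewrite {1}XE pullbackZ pullbackD pullback_cycle234 pullback_cycle243.
by rewrite /tscale /tadd /cycle234 /cycle243; ring.
Qed.

Lemma first_trace_pullback g P X : P \in unitmx -> P^T *m g *m P = eta ->
  (forall a c, first_trace g X a c = 0) -> forall a c, first_trace eta (pullback P X) a c = 0.
Proof.
move=> Pu gP X0; apply: (trace24_pullback_eq0 (B := ginv eta)).
by rewrite ginv_minkowski -(ginv_frame Pu gP).
Qed.

Lemma sum_entrywise_mul (B C : 'M[R]_4) :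
  \sum_(a < 4) \sum_(b < 4) B a b * C a b = \tr (B^T *m C).
Proof.
rewrite /mxtrace exchange_big; apply: eq_bigr => b _; rewrite mxE.
by apply: eq_bigr => a _; rewrite mxE.
Qed.

Lemma traceless_pullback g P h : P \in unitmx -> P^T *m g *m P = eta ->
  \sum_(a < 4) \sum_(b < 4) ginv g a b * h a b = 0 ->
  \sum_(a < 4) \sum_(b < 4) eta a b * (P^T *m h *m P) a b = 0.
Proof.
move=> Pu gP; rewrite !sum_entrywise_mul (ginv_frame Pu gP) !trmx_mul trmxK !mulmxA => h0.
by rewrite mxtrace_mulC !mulmxA.
Qed.

Lemma XXmx_scalar g X : lorentzian_metric g -> irreducible_df g X -> is_scalar_mx (XXmx g X).
Proof.
case=> _ [P [Pu gP]] [dfX irrX].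
rewrite (XXmx_pullback X Pu gP).
suff /is_scalar_mxP[c ->] : is_scalar_mx (XXmx eta (pullback P X)).
  by rewrite scalar_mxC -mulmxA mulmxV // mulmx1 scalar_mx_is_scalar.
have dfY := double_form_pullback P dfX.
case: irrX => [[S [Bi [_ [_ [_ [_ [Ric _]]]]]]] | [[h [hS [htr ->]]] | [[lam ->] |
  [[_ [_ [_ [A23 _]]]] | [[AS Ric] | [h [hA ->]]]]]]].
- apply: XX_scalar_weyl dfY _ (bianchi_pullback P Bi) (first_trace_pullback Pu gP Ric).
  exact: pullback_sym (pullback_swap_pairs P) S.
- rewrite pullback_gh_form gP; apply: XX_scalar_gh_sym; last exact: traceless_pullback Pu gP htr.
  by rewrite !trmx_mul trmxK hS mulmxA.
- rewrite (_ : (fun a b c d => lam * gg_form g a b c d) = tscale lam (gg_form g)) //.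
  by rewrite pullbackZ gg_form_gh pullback_gh_form gP -gg_form_gh; exact: XX_scalar_gg.
- apply: XX_scalar_alt dfY _; exact: pullback_antisym (pullback_swap23 P) A23.
- apply: XX_scalar_antisym dfY _ (first_trace_pullback Pu gP Ric).
  exact: pullback_antisym (pullback_swap_pairs P) AS.
- rewrite pullback_gh_form gP; apply: XX_scalar_gh_skew.
  by rewrite !trmx_mul trmxK hA mulNmx mulmxN mulmxA.
Qed.

End Transfer.

Theorem propositionV2 (R : realFieldType) (g : 'M[R]_4) (X : tensor4 R) :
  lorentzian_metric g -> irreducible_df g X ->
  forall a b : 'I_4, XX g X a b = invI g X * (a == b)%:R.
Proof.
move=> gL irrX a b.
have /is_scalar_mxP[c Xc] := XXmx_scalar gL irrX.
have -> : invI g X = c.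
  by rewrite invI_trace Xc mxtrace_scalar; field.
by have := congr1 (fun M : 'M[R]_4 => M a b) Xc; rewrite !mxE mulr_natr.
Qed.
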